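(* Let $\delta\in(0,1/2)$, $\varepsilon\in(0,1/2]$. If $C:\{0,1\}^k\to\Sigma^m$ is a $(q,\delta,\varepsilon)$ insdel LCC, then there exists a $(q,\delta,\varepsilon)$ insdel LDC $C':\{0,1\}^{k'}\to\Sigma^m$ with $k'=\Omega(k/\log(1/\delta))$.
   Context: $\mathrm{ED}(u,v)$ is the minimum number of single-symbol insertions and deletions transforming $u$ into $v$. A map $C:\{0,1\}^n\to\Sigma^m$ is a $(q,\delta,\varepsilon)$ insdel LDC if there is a randomized algorithm $\mathrm{Dec}$ which, given oracle access to $y\in\Sigma^{m'}$, the length $m'$, and $i\in[n]$, reads at most $q$ symbols of $y$ and satisfies $\Pr[\mathrm{Dec}(y,m',i)=x_i]\ge1/2+\varepsilon$ for every $x\in\{0,1\}^n$, $i\in[n]$, and every $y$ with $\mathrm{ED}(C(x),y)\le2\delta m$. It is a $(q,\delta,\varepsilon)$ insdel LCC (locally correctable insdel code) if the same holds with $i$ ranging over $[m]$ and the requirement $\Pr[\mathrm{Dec}(y,m',i)=C(x)_i]\ge1/2+\varepsilon$. *)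

From mathcomp Require Import all_boot.
From Stdlib Require Import Reals.
Set Implicit Arguments. Unset Strict Implicit. Unset Printing Implicit Defensive.

Section Edit.
Variable S : Type.

Definition insdel_step (u w : seq S) : Prop :=
  exists (a b : seq S) (x : S),
    (u = a ++ b /\ w = a ++ x :: b) \/ (u = a ++ x :: b /\ w = a ++ b).

Inductive ed_within : nat -> seq S -> seq S -> Prop :=
| edw_refl n u : ed_within n u u
| edw_step n u w v : insdel_step u w -> ed_within n w v -> ed_within n.+1 u v.

Definition ED_le (u v : seq S) (d : R) : Prop :=
  exists n : nat, (INR n <= d)%R /\ ed_within n u v.
End Edit.

(* A deterministic adaptive query procedure with outputs in O: at a node it
   reads position j of the oracle y (None if j is out of range) and continues. *)
Inductive qtree (S O : Type) : Type :=
| Leaf of O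
| Query of nat & (option S -> qtree S O).

Fixpoint run (S O : Type) (t : qtree S O) (y : seq S) : O * nat :=
  match t with
  | Leaf o => (o, 0%N)
  | Query j k => let r := run (k (onth y j)) y in (r.1, r.2.+1)
  end.

(* A randomized decoder's behaviour on a fixed input (m', i): a finitely
   supported probability distribution over deterministic query procedures. *)
Definition sumR (s : seq R) : R := foldr Rplus 0%R s.

Definition is_dist (S O : Type) (d : seq (R * qtree S O)) : Prop :=
  (forall p, List.In p d -> (0 <= p.1)%R) /\ sumR (map fst d) = 1%R.

Definition reads_at_most (S O : Type) (q : nat) (d : seq (R * qtree S O)) : Prop :=
  forall p, List.In p d -> forall y : seq S, ((run p.2 y).2 <= q)%N.

Definition prob_out (S : Type) (O : eqType) (d : seq (R * qtree S O))
  (y : seq S) (o : O) : R :=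
  sumR [seq p.1 | p <- d & (run p.2 y).1 == o].

Definition insdel_LDC (Sg : finType) (n m : nat)
  (C : n.-tuple bool -> m.-tuple Sg) (q : nat) (delta eps : R) : Prop :=
  exists Dec : nat -> 'I_n -> seq (R * qtree Sg bool),
    (forall m' i, is_dist (Dec m' i) /\ reads_at_most q (Dec m' i)) /\
    (forall (x : n.-tuple bool) (i : 'I_n) (y : seq Sg),
        ED_le (val (C x)) y (2 * delta * INR m)%R ->
        (/2 + eps <= prob_out (Dec (size y) i) y (tnth x i))%R).

Definition insdel_LCC (Sg : finType) (n m : nat)
  (C : n.-tuple bool -> m.-tuple Sg) (q : nat) (delta eps : R) : Prop :=
  exists Dec : nat -> 'I_m -> seq (R * qtree Sg Sg),
    (forall m' i, is_dist (Dec m' i) /\ reads_at_most q (Dec m' i)) /\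
    (forall (x : n.-tuple bool) (i : 'I_m) (y : seq Sg),
        ED_le (val (C x)) y (2 * delta * INR m)%R ->
        (/2 + eps <= prob_out (Dec (size y) i) y (tnth (C x) i))%R).

From mathcomp Require Import all_boot.
From Stdlib Require Import Reals Lra ZArith.
(* Reals rebinds [^] on nat to [Nat.pow]; restore the ssrnat notations. *)
Import ssrnat.
Set Implicit Arguments. Unset Strict Implicit. Unset Printing Implicit Defensive.

(* An injective insdel LCC has minimum Hamming distance greater than delta m:
   otherwise, fed one of two close codewords, the local corrector would output
   at a coordinate where they differ each of the two symbols with probability
   above 1/2. A feature (i, f), with f : Sg -> bool read at coordinate i,
   separates two words at Hamming distance h for at least a fraction h / 2m of
   all features, so M = ceil(4k / delta) greedily chosen features separate all
   pairs of messages and embed the 2^k codewords injectively into {0,1}^M. By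
   Pajor's form of the Sauer-Shelah lemma the image shatters a set of d
   features with 2^k <= sum_(j <= d) C(M, j) <= (e M / d)^d, which forces
   d >= k / (100 ln (1 / delta)). The new code sends a pattern on these d
   features to a message realizing it; a bit is decoded by running the local
   corrector at the feature's coordinate and applying f. *)

Section EditDistance.
Variable S : Type.

Lemma ed_within_trans a b (u w v : seq S) :
  ed_within a u w -> ed_within b w v -> ed_within (a + b) u v.
Proof.
elim=> [n {}u|n {}u w' {}w st _ IH] wv; last first.
  by rewrite addSn; apply: edw_step st (IH wv).
elim: wv => [n' {}u|n' {}u w'' {}v st _ IH]; first exact: edw_refl.
by rewrite addnS; apply: edw_step st IH.
Qed.

Lemma insdel_step_cons x (u w : seq S) :
  insdel_step u w -> insdel_step (x :: u) (x :: w).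
Proof. by case=> a [b [y st]]; exists (x :: a), b, y; case: st => -[-> ->]; [left|right]. Qed.

Lemma ed_within_cons x n (u v : seq S) :
  ed_within n u v -> ed_within n (x :: u) (x :: v).
Proof.
elim=> [{}n {}u|{}n {}u w {}v st _ IH]; first exact: edw_refl.
exact: edw_step (insdel_step_cons x st) IH.
Qed.

Lemma ed_within_subst x y (u : seq S) : ed_within 2 (x :: u) (y :: u).
Proof.
apply: (@edw_step S 1 _ u); first by exists [::], u, x; right.
apply: (@edw_step S 0 _ (y :: u)); first by exists [::], u, y; left.
exact: edw_refl.
Qed.
End EditDistance.

Definition hamming (S : eqType) m (w w' : m.-tuple S) : nat :=
  \sum_(i < m) (tnth w i != tnth w' i).

Lemma ed_within_hamming (S : eqType) m (w w' : m.-tuple S) :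
  ed_within (2 * hamming w w') w w'.
Proof.
elim: m w w' => [|m IH] w w'; first by rewrite (tuple0 w) (tuple0 w'); apply: edw_refl.
case: w / tupleP => x w; case: w' / tupleP => y w'.
rewrite /hamming big_ord_recl !tnth0.
under eq_bigr => i _ do rewrite !tnthS.
rewrite mulnDr; case: eqP => [->|_]; first by apply: ed_within_cons (IH _ _).
exact: ed_within_trans (ed_within_subst _ _ _) (ed_within_cons _ (IH w w')).
Qed.

Section PostProcessing.
Variables (S O O' : Type) (f : O -> O').

Fixpoint qtree_map (t : qtree S O) : qtree S O' :=
  match t with
  | Leaf o => Leaf S (f o)
  | Query j k => Query j (fun s => qtree_map (k s))
  end.

Lemma run_qtree_map t y : run (qtree_map t) y = (f (run t y).1, (run t y).2).
Proof. by elim: t => [o|j k IH] //=; rewrite IH. Qed.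

Definition dist_map (d : seq (R * qtree S O)) : seq (R * qtree S O') :=
  [seq (p.1, qtree_map p.2) | p <- d].

Lemma is_dist_map d : is_dist d -> is_dist (dist_map d).
Proof.
case=> ge0 sum1; split; last by rewrite -sum1 -map_comp.
by move=> p /List.in_map_iff [p' [<- /ge0]].
Qed.

Lemma reads_at_most_map q d : reads_at_most q d -> reads_at_most q (dist_map d).
Proof.
move=> rd _ /List.in_map_iff [p [<- pd]] y /=.
by rewrite run_qtree_map; apply: rd.
Qed.
End PostProcessing.

Section Outcomes.
Variables (S : Type) (O : eqType).
Implicit Types (d : seq (R * qtree S O)) (y : seq S).

Lemma prob_out_map (O' : eqType) (f : O -> O') d y o :
  (forall p, List.In p d -> 0 <= p.1)%R ->
  (prob_out d y o <= prob_out (dist_map f d) y (f o))%R.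
Proof.
rewrite /prob_out; elim: d => [|p d IH] ge0 /=; first lra.
have /IH {}IH : forall p', List.In p' d -> (0 <= p'.1)%R by move=> p' ?; apply: ge0; right.
have := ge0 p (or_introl erefl); rewrite run_qtree_map /=.
case: eqP => [->|_]; rewrite ?eqxx /=; first lra.
by case: eqP => _ /=; lra.
Qed.

Lemma prob_out_add_le d y o o' :
  (forall p, List.In p d -> 0 <= p.1)%R -> o != o' ->
  (prob_out d y o + prob_out d y o' <= sumR (map fst d))%R.
Proof.
rewrite /prob_out => + neq; elim: d => [|p d IH] ge0 /=; first lra.
have /IH {}IH : forall p', List.In p' d -> (0 <= p'.1)%R by move=> p' ?; apply: ge0; right.
have := ge0 p (or_introl erefl).
case: eqP => [eo|_]; case: eqP => [eo'|_] /=; try lra.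
by move: neq; rewrite -eo -eo' eqxx.
Qed.
End Outcomes.

Lemma insdel_LCC_hamming_gt (Sg : finType) k m (C : k.-tuple bool -> m.-tuple Sg)
    q (delta eps : R) :
  (0 < eps)%R -> injective C -> insdel_LCC C q delta eps ->
  forall x x', x != x' -> (delta * INR m < INR (hamming (C x) (C x')))%R.
Proof.
move=> eps_gt0 injC [Dec [DecP DecC]] x x' neq.
apply: Rnot_le_lt => close.
have [i neq_i] : exists i, tnth (C x) i != tnth (C x') i.
  case: (pickP (fun i => tnth (C x) i != tnth (C x') i)) => [i ?|same]; first by exists i.
  by case/eqP: neq; apply/injC/eq_from_tnth => i; apply/eqP/negbFE/same.
have ED_x : ED_le (val (C x)) (val (C x')) (2 * delta * INR m).
  exists (2 * hamming (C x) (C x')); split; last exact: ed_within_hamming.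
  by rewrite mult_INR Rmult_assoc; apply: Rmult_le_compat_l; [simpl; lra|].
have ED_x' : ED_le (val (C x')) (val (C x')) (2 * delta * INR m).
  exists 0; split; last exact: edw_refl.
  have := pos_INR (hamming (C x) (C x')); simpl; lra.
have [[ge0 sum1] _] := DecP (size (val (C x'))) i.
have := prob_out_add_le (val (C x')) ge0 neq_i.
have := DecC x i _ ED_x; have := DecC x' i _ ED_x'.
rewrite sum1; lra.
Qed.

Lemma sum_nat_of_bool_card (I : finType) (P : pred I) :
  \sum_(i : I) (P i : nat) = #|[set i | P i]|.
Proof. by rewrite -sum1dep_card [RHS]big_mkcond; apply: eq_bigr => i _; case: (P i). Qed.

Notation feature Sg m := ('I_m * {ffun Sg -> bool})%type.

Section Features.
Variables (Sg : finType) (m : nat).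
Local Notation word := (m.-tuple Sg).
Implicit Types (phi : feature Sg m) (w : word) (U : {set word * word}).

Definition feature_value phi w : bool := phi.2 (tnth w phi.1).

Definition separates phi w w' : bool := feature_value phi w != feature_value phi w'.

Definition separated_by (l : seq (feature Sg m)) w w' : bool :=
  has (fun phi => separates phi w w') l.

Lemma card_ffun_separating (x y : Sg) : x != y ->
  #|{ffun Sg -> bool}| <= 2 * #|[set f : {ffun Sg -> bool} | f x != f y]|.
Proof.
move=> neq; pose flip (f : {ffun Sg -> bool}) := [ffun z => (z == x) (+) f z].
have flipK : involutive flip.
  by move=> f; apply/ffunP => z; rewrite !ffunE addbA addbb.
have flip_eq : flip @: [set f : {ffun Sg -> bool} | f x == f y] \subset
                [set f : {ffun Sg -> bool} | f x != f y].
  apply/subsetP => g /imsetP [f]; rewrite !inE => /eqP fxy ->.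
  by rewrite !ffunE eqxx [y == x]eq_sym (negbTE neq) fxy; case: (f y).
rewrite -cardsT -(cardsID [set f : {ffun Sg -> bool} | f x == f y]) setTI setTD.
rewrite mul2n -addnn leq_add //.
  by rewrite -(card_imset _ (inv_inj flipK)) subset_leq_card.
by apply: subset_leq_card; apply/subsetP => f; rewrite !inE.
Qed.

Lemma hamming_card_separates w w' :
  hamming w w' * #|{ffun Sg -> bool}| <= 2 * #|[set phi | separates phi w w']|.
Proof.
rewrite -sum_nat_of_bool_card -(pair_bigA _ (fun i f => separates (i, f) w w' : nat)) /=.
rewrite /hamming big_distrl big_distrr leq_sum //= => i _.
rewrite sum_nat_of_bool_card; case: eqP => [_|/eqP neq]; first by rewrite mul0n.
rewrite mul1n (eq_card (B := [set f : {ffun Sg -> bool} | f (tnth w i) != f (tnth w' i)])) //.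
exact: card_ffun_separating.
Qed.

Lemma exists_feature_separating_many U : 0 < m ->
  exists phi, \sum_(p in U) hamming p.1 p.2 <= 2 * m * #|[set p in U | separates phi p.1 p.2]|.
Proof.
move=> m_gt0; pose nsep phi := #|[set p in U | separates phi p.1 p.2]|.
have [phi max_phi] :
    exists phi, \sum_(psi : feature Sg m) nsep psi <= #|{: feature Sg m}| * nsep phi.
  have [|phi max_phi] := @eq_bigmax _ nsep.
    by apply/card_gt0P; exists (Ordinal m_gt0, [ffun=> false]).
  by exists phi; rewrite -max_phi -sum_nat_const leq_sum // => psi _; apply: leq_bigmax.
have double_count : \sum_(p in U) #|[set psi | separates psi p.1 p.2]| = \sum_psi nsep psi.
  under [RHS]eq_bigr => psi _ do rewrite /nsep -sum_nat_of_bool_card.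
  rewrite exchange_big [LHS]big_mkcond /=; apply: eq_bigr => p _.
  by case: (p \in U); rewrite /= ?sum_nat_of_bool_card // big1.
exists phi; have ffun_gt0 : 0 < #|{ffun Sg -> bool}| by apply/card_gt0P; exists [ffun=> false].
rewrite -(leq_pmul2l ffun_gt0) mulnC big_distrl /=.
apply: (@leq_trans (\sum_(p in U) 2 * #|[set psi | separates psi p.1 p.2]|)).
  by apply: leq_sum => p _; apply: hamming_card_separates.
rewrite -big_distrr /= double_count.
apply: leq_trans (leq_mul (leqnn 2) max_phi) _.
by rewrite card_prod card_ord /nsep [m * _]mulnC -mulnA mulnCA [2 * (m * _)]mulnA.
Qed.

Lemma exists_feature_shrinking (a : R) U : 0 < m ->
  (forall p, p \in U -> a * INR m <= INR (hamming p.1 p.2))%R ->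
  exists phi, (INR #|[set p in U | ~~ separates phi p.1 p.2]| <= (1 - a / 2) * INR #|U|)%R.
Proof.
move=> m_gt0 far; have [phi many] := exists_feature_separating_many U m_gt0.
exists phi; set N := #|[set p in U | separates phi p.1 p.2]|.
have card_split : #|[set p in U | ~~ separates phi p.1 p.2]| + N = #|U|.
  rewrite addnC -(cardsID [set p | separates phi p.1 p.2] U).
  by congr (_ + _); apply: eq_card => p; rewrite !inE andbC.
have sum_ge : (a * INR m * INR #|U| <= INR (\sum_(p in U) hamming p.1 p.2))%R.
  rewrite -sum1_card; apply: (big_ind2 (fun i j : nat => a * INR m * INR i <= INR j)%R).
  - by rewrite /=; lra.
  - by move=> i1 j1 i2 j2 le1 le2; rewrite !plus_INR; lra.
  - by move=> p /far /=; lra.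
have {}many : (a * INR m * INR #|U| <= 2 * INR m * INR N)%R.
  by apply: Rle_trans sum_ge _; rewrite -[2%R]/(INR 2) -!mult_INR; apply/le_INR/leP.
have m_pos : (0 < INR m)%R by apply/lt_0_INR/ltP.
have : (a * INR #|U| <= 2 * INR N)%R by apply: (Rmult_le_reg_l (INR m)) => //; lra.
by rewrite -card_split plus_INR; lra.
Qed.

Lemma exists_features_separating (a : R) n U : 0 < m -> (0 <= a <= 2)%R ->
  (forall p, p \in U -> a * INR m <= INR (hamming p.1 p.2))%R ->
  exists l : n.-tuple (feature Sg m),
    (INR #|[set p in U | ~~ separated_by l p.1 p.2]| <= (1 - a / 2) ^ n * INR #|U|)%R.
Proof.
move=> m_gt0 a_bd; elim: n U => [|n IH] U far.
  exists [tuple]; rewrite Rmult_1_l; apply/le_INR/leP/subset_leq_card/subsetP => p.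
  by rewrite inE => /andP [].
have [phi shrink] := exists_feature_shrinking m_gt0 far.
have [|l small] := IH [set p in U | ~~ separates phi p.1 p.2].
  by move=> p; rewrite inE => /andP [/far].
exists [tuple of phi :: l].
have -> : [set p in U | ~~ separated_by (phi :: l) p.1 p.2] =
          [set p in [set p in U | ~~ separates phi p.1 p.2] | ~~ separated_by l p.1 p.2].
  by apply/setP => p; rewrite !inE /= negb_or andbA.
apply: Rle_trans small _; rewrite /= [(_ * _ ^ n)%R]Rmult_comm Rmult_assoc.
by apply: Rmult_le_compat_l => //; apply: pow_le; lra.
Qed.
End Features.

Section Shattering.
Variable X : finType.
Implicit Types (B : {set {ffun X -> bool}}) (S : {set X}).

Definition shatters B S : bool :=
  [forall h : {ffun X -> bool}, [exists b in B, [forall x in S, b x == h x]]].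

Definition fiber B x e := [set b in B | b x == e].

Lemma shatters_set0 B b : b \in B -> shatters B set0.
Proof.
move=> bB; apply/forallP => h; apply/existsP; exists b; rewrite bB /=.
by apply/forallP => x; rewrite inE.
Qed.

Lemma shattersS B B' S : B \subset B' -> shatters B S -> shatters B' S.
Proof.
move=> sBB' /forallP shB; apply/forallP => h.
have /existsP [b /andP [bB agree]] := shB h.
by apply/existsP; exists b; rewrite (subsetP sBB').
Qed.

Lemma shatters_fiber_notin B S x e : shatters (fiber B x e) S -> x \notin S.
Proof.
move=> /forallP /(_ [ffun=> ~~ e]) /existsP [b /andP [+ /forallP agree]].
rewrite inE => /andP [_ /eqP bx]; apply/negP => xS.
by have := agree x; rewrite xS ffunE bx; case: (e).
Qed.

Lemma shatters_setU1 B x S :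
  shatters (fiber B x false) S -> shatters (fiber B x true) S -> shatters B (x |: S).
Proof.
move=> sh0 sh1; apply/forallP => h.
have /existsP [b /andP [+ /forallP agree]] := forallP (if h x then sh1 else sh0) h.
rewrite inE => /andP [bB /eqP bx]; apply/existsP; exists b; rewrite bB /=.
apply/forallP => z; rewrite in_setU1; case: eqP => [->|_] /=; last exact: agree.
by move: bx; case: (h x) => ->.
Qed.

Lemma card_shatters_fibers B x :
  #|[set S | shatters (fiber B x false) S]| + #|[set S | shatters (fiber B x true) S]|
    <= #|[set S | shatters B S]|.
Proof.
set sh0 := [set S | shatters _ S]; set sh1 := [set S | shatters _ S].
have fiber_sub e : fiber B x e \subset B by apply/subsetP => b; rewrite inE => /andP [].
have notin0 S : S \in sh0 -> x \notin S by rewrite inE; apply: shatters_fiber_notin.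
pose up := [set x |: S | S in sh0 :&: sh1].
have card_up : #|up| = #|sh0 :&: sh1|.
  apply: card_in_imset => S T; rewrite !in_setI => /andP [/notin0 xS _] /andP [/notin0 xT _] eqST.
  by rewrite -(setU1K xS) -(setU1K xT) eqST.
have disj : [disjoint sh0 :|: sh1 & up].
  apply/pred0P => T /=; apply/negP => /andP [S01 /imsetP [S _ defT]].
  suff : x \notin T by rewrite defT setU11.
  by case/setUP: S01; [apply: notin0|rewrite inE; apply: shatters_fiber_notin].
have sub : (sh0 :|: sh1) :|: up \subset [set S | shatters B S].
  apply/subsetP => S; rewrite !inE => /orP [/orP [] |/imsetP [T]].
  - exact: shattersS (fiber_sub false).
  - exact: shattersS (fiber_sub true).
  - by rewrite !inE => /andP [T0 T1] ->; apply: shatters_setU1.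
apply: leq_trans (subset_leq_card sub).
by rewrite cardsU (disjoint_setI0 disj) cards0 subn0 card_up cardsUI.
Qed.

(* Pajor's lemma, by splitting B along a coordinate where two of its members differ. *)
Lemma card_le_shattered B : #|B| <= #|[set S | shatters B S]|.
Proof.
elim: {B}_.+1 {-2}B (ltnSn #|B|) => // n IH B; rewrite ltnS => Bn.
have [B_le1|/card_gt1P [b1 [b2 [b1B b2B neq]]]] := leqP #|B| 1.
  have [B0|[b bB]] := set_0Vmem B; first by rewrite B0 cards0.
  apply: leq_trans B_le1 _; rewrite card_gt0; apply/set0Pn; exists set0.
  by rewrite inE (shatters_set0 bB).
have [x b12x] : exists x, b1 x != b2 x.
  by apply/existsP; apply: contraNT neq => /existsPn same; apply/eqP/ffunP => x; apply/eqP/negPn.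
have card_fibers : #|fiber B x false| + #|fiber B x true| = #|B|.
  rewrite -(cardsID [set b : {ffun X -> bool} | b x] B) addnC.
  by congr (_ + _); apply: eq_card => b; rewrite !inE; case: (b x); rewrite /= ?andbT ?andbF.
have fiber_gt0 e : 0 < #|fiber B x e|.
  apply/card_gt0P; have : (b1 x == e) || (b2 x == e).
    by move: b12x; case: (b1 x); case: (b2 x); case: e.
  by case/orP => ?; [exists b1 | exists b2]; rewrite inE; apply/andP.
have fiber_lt e : #|fiber B x e| < #|B|.
  rewrite -card_fibers; case: e.
    by rewrite -[X in X < _]add0n ltn_add2r fiber_gt0.
  by rewrite -[X in X < _]addn0 ltn_add2l fiber_gt0.
apply: leq_trans (card_shatters_fibers B x).
by rewrite -card_fibers leq_add // IH // (leq_trans (fiber_lt _)).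
Qed.

Lemma card_small_sets (P : {set {set X}}) d :
  (forall S, S \in P -> #|S| <= d) -> #|P| <= \sum_(j < d.+1) 'C(#|X|, j).
Proof.
move=> small; apply: (@leq_trans (\sum_(S : {set X}) \sum_(j < d.+1) (#|S| == j : nat))).
  rewrite -sum1_card big_mkcond /=; apply: leq_sum => S _; case: ifP => // /small S_le.
  by rewrite (bigD1 (@Ordinal d.+1 #|S| S_le)) //= eqxx leq_addr.
by rewrite exchange_big leq_sum // => j _; rewrite sum_nat_of_bool_card card_draws.
Qed.

Lemma sauer_shelah B : B != set0 ->
  exists2 S, shatters B S & #|B| <= \sum_(j < #|S|.+1) 'C(#|X|, j).
Proof.
move=> /set0Pn [b /shatters_set0 sh0].
have [S shS maxS] := @arg_maxnP _ set0 (shatters B) (fun S => #|S|) sh0.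
exists S => //; apply: leq_trans (card_le_shattered B) (card_small_sets _).
by move=> T; rewrite inE; apply: maxS.
Qed.

Lemma shatters_tuple B S : shatters B S ->
  forall t : #|S|.-tuple bool, exists2 b, b \in B & forall j, b (enum_val j) = tnth t j.
Proof.
move=> /forallP shS t; pose h := [ffun x => [exists j, (enum_val j == x) && tnth t j]].
have /existsP [b /andP [bB /forallP agree]] := shS h.
exists b => // j; have := agree (enum_val j); rewrite enum_valP ffunE => /eqP ->.
apply/existsP/idP => [[j' /andP [/eqP /enum_val_inj -> ->]] // | tj].
by exists j; rewrite eqxx.
Qed.
End Shattering.

Lemma insdel_LDC_nullary (Sg : finType) m (C : 0.-tuple bool -> m.-tuple Sg) q delta eps :
  insdel_LDC C q delta eps.
Proof.
exists (fun _ _ => [:: (1%R, Leaf Sg false)]); split; last by move=> x [].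
move=> _ _; split; last by move=> p [<-|[]].
by split; [move=> p [<-|[]] /=|rewrite /sumR /=]; lra.
Qed.

Lemma insdel_LDC_of_features (Sg : finType) k m d (C : k.-tuple bool -> m.-tuple Sg)
    q delta eps (g : 'I_d -> feature Sg m) (enc : d.-tuple bool -> k.-tuple bool) :
  insdel_LCC C q delta eps ->
  (forall t j, feature_value (g j) (C (enc t)) = tnth t j) ->
  insdel_LDC (C \o enc) q delta eps.
Proof.
move=> [Dec [DecP DecC]] encP.
exists (fun m' j => dist_map (g j).2 (Dec m' (g j).1)); split.
  move=> m' j; have [dist reads] := DecP m' (g j).1.
  by split; [apply: is_dist_map | apply: reads_at_most_map].
move=> t j y close; have [[ge0 _] _] := DecP (size y) (g j).1.
by apply: Rle_trans (DecC _ _ _ close) _; rewrite -encP; apply: prob_out_map.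
Qed.

Lemma INR_expn a n : INR (a ^ n) = (INR a ^ n)%R.
Proof. by elim: n => [|n IH] //; rewrite expnS mult_INR IH. Qed.

Lemma INR_subn a b : b <= a -> INR (a - b) = (INR a - INR b)%R.
Proof. by move/leP; apply: minus_INR. Qed.

Lemma exp_pow y n : (exp y ^ n = exp (INR n * y))%R.
Proof. by rewrite -Rpower_pow; [rewrite /Rpower ln_exp | apply: exp_pos]. Qed.

Lemma ln_le x y : (0 < x)%R -> (x <= y)%R -> (ln x <= ln y)%R.
Proof. by move=> x_gt0 [/(ln_increasing _ _ x_gt0)|<-]; lra. Qed.

Lemma ln_le_sub1 x : (0 < x)%R -> (ln x <= x - 1)%R.
Proof. by move=> x_gt0; have := exp_ineq1_le (ln x); rewrite exp_ln //; lra. Qed.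

Lemma pow_sub_half_mul_pow4_lt1 (a : R) k M :
  (0 < a <= 2)%R -> 0 < k -> (4 * INR k / a <= INR M)%R -> ((1 - a / 2) ^ M * 4 ^ k < 1)%R.
Proof.
move=> a_bd k_gt0 Mk.
have r_le : ((1 - a / 2) ^ M <= exp (-2) ^ k)%R.
  apply: Rle_trans (pow_incr _ (exp (- (a / 2))) M _) _.
    by split; [|have := exp_ineq1_le (- (a / 2))]; lra.
  have : (4 * INR k <= INR M * a)%R.
    have := Rmult_le_compat_r a _ _ ltac:(lra) Mk.
    by rewrite /Rdiv Rmult_assoc Rinv_l; lra.
  rewrite !exp_pow => Mk_a; have : (INR M * - (a / 2) <= INR k * -2)%R by lra.
  by case/Rle_lt_or_eq_dec => [/exp_increasing|->]; lra.
have e2_gt4 : (4 < exp 2)%R.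
  have e1 := exp_ineq1 1 ltac:(lra).
  by rewrite -[2%R]/(1 + 1)%R exp_plus; nra.
have four_exp2 : (0 <= 4 * exp (-2) < 1)%R.
  have := exp_pos (-2); have : (exp (-2) * exp 2 = 1)%R by rewrite -exp_plus Rplus_opp_l exp_0.
  by split; nra.
have [_ lt1] := pow_lt_1_compat _ _ four_exp2 (elimT ltP k_gt0).
have := pow_le 4 k ltac:(lra); rewrite Rpow_mult_distr in lt1; nra.
Qed.

(* [sum_(j <= d) 'C(M, j) (d / M)^d <= (1 + d / M)^M] with denominators cleared. *)
Lemma sum_binomial_mul_le M d : d <= M ->
  (\sum_(j < d.+1) 'C(M, j)) * (d ^ d * M ^ (M - d)) <= (M + d) ^ M.
Proof.
move=> dM; rewrite expnDn big_distrl /= (bigID (fun i : 'I_M.+1 => i < d.+1)) /=.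
apply: leq_trans (leq_addr _ _).
rewrite (big_ord_widen _ (fun i => 'C(M, i) * (d ^ d * M ^ (M - d))) (dM : d.+1 <= M.+1)).
apply: leq_sum => i /= i_le; rewrite leq_mul2l; apply/orP; right.
have -> : M - i = (M - d) + (d - i) by rewrite addnBA ?subnK // -ltnS (leq_trans i_le).
rewrite expnD mulnC -mulnA leq_mul2l; apply/orP; right.
have -> : d ^ d = d ^ (d - i) * d ^ i by rewrite -expnD subnK // -ltnS.
rewrite leq_mul2r; apply/orP; right.
by case: (d - i) => [|e]; rewrite ?expn0 // leq_exp2r.
Qed.

Lemma ln_sum_binomial_le M d : 0 < d <= M ->
  (ln (INR (\sum_(j < d.+1) 'C(M, j))) <= INR d * (1 + ln (INR M / INR d)))%R.
Proof.
case/andP => d_gt0 dM; have := le_INR _ _ (elimT leP (sum_binomial_mul_le dM)).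
rewrite !mult_INR !INR_expn plus_INR.
set s := INR _; set D := INR d; set Mr := INR M.
have D_gt0 : (0 < D)%R by apply/lt_0_INR/ltP.
have D_le : (D <= Mr)%R by apply/le_INR/leP.
have s_gt0 : (0 < s)%R by apply/lt_0_INR/ltP; rewrite big_ord_recl bin0.
have Mr_gt0 : (0 < Mr)%R by lra.
have MrD_gt0 : (0 < Mr + D)%R by lra.
have invD_gt0 : (0 < / D)%R by apply: Rinv_0_lt_compat.
have Dd_gt0 : (0 < D ^ d)%R by apply: pow_lt.
have MrMd_gt0 : (0 < Mr ^ (M - d))%R by apply: pow_lt.
have prod_gt0 : (0 < D ^ d * Mr ^ (M - d))%R by apply: Rmult_lt_0_compat.
move=> /(ln_le (Rmult_lt_0_compat _ _ s_gt0 prod_gt0)).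
rewrite !ln_mult ?ln_pow ?INR_subn ?ln_Rinv //.
have ln_MrD : (ln (Mr + D) <= ln Mr + D / Mr)%R.
  have ratio_gt0 : (0 < D / Mr)%R by apply: Rdiv_lt_0_compat; lra.
  have -> : (Mr + D = Mr * (1 + D / Mr))%R by field; lra.
  by rewrite ln_mult; try lra; have := @ln_le_sub1 (1 + D / Mr) ltac:(lra); lra.
have : (Mr * (D / Mr) = D)%R by field; lra.
rewrite -/D -/Mr; nra.
Qed.

Lemma mul_one_add_ln_div_le (D Dc Mr : R) : (0 < D <= Dc)%R -> (0 < Mr)%R ->
  (D * (1 + ln (Mr / D)) <= Dc * (1 + Rmax 0 (ln (Mr / Dc))))%R.
Proof.
move=> [D_gt0 D_le] Mr_gt0; have Dc_gt0 : (0 < Dc)%R by lra.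
have -> : ln (Mr / D) = (ln (Mr / Dc) + ln (Dc / D))%R.
  rewrite -ln_mult; first by congr ln; field; lra.
  1,2: by apply: Rdiv_lt_0_compat.
have : (D * ln (Dc / D) <= Dc - D)%R.
  have := @ln_le_sub1 (Dc / D) (Rdiv_lt_0_compat _ _ Dc_gt0 D_gt0).
  have -> : (Dc - D = D * (Dc / D - 1))%R by field; lra.
  by move/(Rmult_le_compat_l D); apply; lra.
set x := ln (Mr / Dc); have max_ge0 := Rmax_l 0 x; have max_ge := Rmax_r 0 x.
have := Rmult_le_compat_l D _ _ (Rlt_le _ _ D_gt0) max_ge.
have := Rmult_le_compat_r (Rmax 0 x) _ _ max_ge0 D_le.
lra.
Qed.

Lemma rate_lower_bound_real (K D Mr delta : R) :
  (0 < delta < /2)%R -> (1 <= K)%R -> (0 < D)%R -> (0 < Mr <= 4 * K / delta + 1)%R ->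
  (K * ln 2 <= D * (1 + ln (Mr / D)))%R -> (/100 * K / ln (/ delta) <= D)%R.
Proof.
move=> delta_bd K_ge1 D_gt0 [Mr_gt0 Mk] entropy; set L := ln (/ delta).
have inv_delta_gt2 : (2 < / delta)%R.
  by rewrite -[2%R]Rinv_inv; apply: Rinv_lt_contravar; lra.
have L_gt : (/2 < L)%R by apply: Rlt_trans ln_lt_2 (ln_increasing _ _ _ inv_delta_gt2); lra.
set Dc := (/100 * K / L)%R; apply: Rnot_lt_le => D_lt.
have DcL : (Dc * L = K / 100)%R by rewrite /Dc; field; lra.
have Dc_gt0 : (0 < Dc)%R by nra.
have ratio_le : (Mr / Dc <= 500 * L * / delta)%R.
  apply: (Rmult_le_reg_r Dc) => //.
  have -> : (Mr / Dc * Dc = Mr)%R by field; lra.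
  have -> : (500 * L * / delta * Dc = 5 * K * / delta)%R.
    by transitivity (500 * (Dc * L) * / delta)%R; [ring | rewrite DcL; field; lra].
  have := Rmult_le_compat 1 K 1 (/ delta) ltac:(lra) ltac:(lra) K_ge1 ltac:(lra).
  by move: Mk; rewrite /Rdiv; lra.
have ln_ratio : (ln (Mr / Dc) <= 8 + 2 * L)%R.
  have ln500 : (ln 500 <= 9)%R.
    apply: Rle_trans (ln_le _ (_ : 500 <= 2 ^ 9)%R) _; try (simpl; lra).
    by rewrite ln_pow; [have := @ln_le_sub1 2; simpl; lra | lra].
  have lnL := @ln_le_sub1 L ltac:(lra).
  apply: Rle_trans (ln_le (Rdiv_lt_0_compat _ _ Mr_gt0 Dc_gt0) ratio_le) _.
  have L_gt0 : (0 < L)%R by lra.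
  by rewrite (ln_mult (500 * L)) ?(ln_mult 500 L) -/L //; lra.
have := mul_one_add_ln_div_le (conj D_gt0 (Rlt_le _ _ D_lt)) Mr_gt0.
have := Rmult_le_compat_l Dc _ _ (Rlt_le _ _ Dc_gt0)
  (Rmax_lub 0 _ (8 + 2 * L) ltac:(lra) ln_ratio).
have := Rmult_lt_compat_l Dc _ _ Dc_gt0 L_gt.
have := Rmult_lt_compat_l K _ _ ltac:(lra) ln_lt_2.
lra.
Qed.

Lemma rate_lower_bound k M d (delta : R) :
  (0 < delta < /2)%R -> 0 < k -> (INR M <= 4 * INR k / delta + 1)%R -> d <= M ->
  2 ^ k <= \sum_(j < d.+1) 'C(M, j) -> (/100 * INR k / ln (/ delta) <= INR d)%R.
Proof.
move=> delta_bd k_gt0 Mk dM card_le.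
have d_gt0 : 0 < d.
  rewrite lt0n; apply: contraTneq card_le => ->.
  by rewrite big_ord1 bin0 -ltnNge -{1}(expn0 2) ltn_exp2l.
have D_gt0 : (0 < INR d)%R by apply/lt_0_INR/ltP.
apply: (rate_lower_bound_real (Mr := INR M)) => //.
- by apply: (le_INR 1); apply/leP.
- by split=> //; apply: Rlt_le_trans D_gt0 _; apply/le_INR/leP.
apply: Rle_trans (ln_sum_binomial_le _); last by rewrite d_gt0.
rewrite -ln_pow; last lra.
apply: ln_le; first by apply: pow_lt; lra.
by rewrite -[2%R]/(INR 2) -INR_expn; apply/le_INR/leP.
Qed.

Lemma exists_nat_between (r : R) : (0 <= r)%R -> exists n : nat, (r <= INR n <= r + 1)%R.
Proof.
move=> r_ge0; have [up_gt up_le] := archimed r.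
have up_ge0 : (0 <= up r)%Z by apply: le_IZR; lra.
by exists (Z.to_nat (up r)); rewrite INR_IZR_INZ Z2Nat.id //; lra.
Qed.

Lemma exists_separating_features (Sg : finType) k m M (C : k.-tuple bool -> m.-tuple Sg)
    (a : R) :
  0 < k -> (0 < a <= 2)%R -> (4 * INR k / a <= INR M)%R ->
  (forall x x', x != x' -> a * INR m < INR (hamming (C x) (C x')))%R ->
  exists l : M.-tuple (feature Sg m), forall x x', x != x' -> separated_by l (C x) (C x').
Proof.
move=> k_gt0 a_bd Mk far.
have m_gt0 : 0 < m.
  have neq : nseq_tuple k false != nseq_tuple k true.
    by apply/eqP => /(congr1 (fun t => tnth t (Ordinal k_gt0))); rewrite !tnth_nseq.
  case: m C far => // C /(_ _ _ neq); rewrite /hamming big_ord0 /= => lt0.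
  by exfalso; lra.
pose U := [set (C p.1, C p.2) | p in [set p : k.-tuple bool * k.-tuple bool | p.1 != p.2]].
have farU p : p \in U -> (a * INR m <= INR (hamming p.1 p.2))%R.
  by case/imsetP => -[x y] /[!inE] /= /far lt -> /=; lra.
have a_bd' : (0 <= a <= 2)%R by lra.
have [l few] := exists_features_separating M m_gt0 a_bd' farU.
exists l => x y neq; apply: contraT => not_sep.
have inU : (C x, C y) \in U by apply/imsetP; exists (x, y); rewrite ?inE.
suff : #|[set p in U | ~~ separated_by l p.1 p.2]| == 0.
  by rewrite cards_eq0 => /eqP/setP/(_ (C x, C y)); rewrite !inE inU /= not_sep.
have card_U : (INR #|U| <= 4 ^ k)%R.
  have -> : (4 ^ k = INR (4 ^ k))%R by rewrite INR_expn; congr (pow _ k); simpl; lra.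
  apply/le_INR/leP.
  apply: leq_trans (leq_imset_card _ _) (leq_trans (max_card _) _).
  by rewrite card_prod card_tuple card_bool -expnMn.
have lt1 := pow_sub_half_mul_pow4_lt1 a_bd k_gt0 Mk.
have pow_ge0 : (0 <= (1 - a / 2) ^ M)%R by apply: pow_le; lra.
rewrite -leqn0 -ltnS; apply/ltP/INR_lt; apply: Rle_lt_trans few (Rle_lt_trans _ _ _ _ lt1).
exact: Rmult_le_compat_l.
Qed.

Lemma exists_shattered_features (Sg : finType) k m M (C : k.-tuple bool -> m.-tuple Sg)
    (l : M.-tuple (feature Sg m)) :
  (forall x x', x != x' -> separated_by l (C x) (C x')) ->
  exists d (g : 'I_d -> feature Sg m) (enc : d.-tuple bool -> k.-tuple bool),
    [/\ forall t j, feature_value (g j) (C (enc t)) = tnth t j,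
        d <= M & 2 ^ k <= \sum_(j < d.+1) 'C(M, j)].
Proof.
move=> sep_l; pose emb x : {ffun 'I_M -> bool} := [ffun j => feature_value (tnth l j) (C x)].
have emb_inj : injective emb.
  move=> x y eq_emb; apply/eqP; apply: contraT => /sep_l /hasP [_ /tnthP [j ->]].
  have := congr1 (fun f : {ffun 'I_M -> bool} => f j) eq_emb.
  by rewrite /separates !ffunE => ->; rewrite eqxx.
have [|S shS card_le] := sauer_shelah (B := [set emb x | x : k.-tuple bool]).
  by apply/set0Pn; exists (emb (nseq_tuple k false)); apply: imset_f.
rewrite card_imset // card_tuple card_bool card_ord in card_le.
have encP (t : #|S|.-tuple bool) : exists x, [forall j, emb x (enum_val j) == tnth t j].
  have [_ /imsetP [x _ ->] agree] := shatters_tuple shS t.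
  by exists x; apply/forallP => j; rewrite agree.
exists #|S|, (fun j => tnth l (enum_val j)), (fun t => xchoose (encP t)); split => //.
  by move=> t j; have /forallP /(_ j) /eqP := xchooseP (encP t); rewrite ffunE.
by rewrite -[M in _ <= M]card_ord max_card.
Qed.

Theorem mainTheorem7 :
  exists c : R, (0 < c)%R /\
  forall (Sg : finType) (q k m : nat) (C : k.-tuple bool -> m.-tuple Sg)
         (delta eps : R),
    (0 < delta < /2)%R -> (0 < eps <= /2)%R ->
    injective C ->
    insdel_LCC C q delta eps ->
    exists (k' : nat) (C' : k'.-tuple bool -> m.-tuple Sg),
      insdel_LDC C' q delta eps /\
      (c * INR k / ln (/ delta) <= INR k')%R.
Proof.
exists (/100)%R; split; first lra.
move=> Sg q k m C delta eps delta_bd eps_bd injC LCC.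
have [k0|k_gt0] := posnP k.
  exists 0, (fun _ => C (nseq_tuple k false)); split; first exact: insdel_LDC_nullary.
  by rewrite k0 /= Rmult_0_r /Rdiv Rmult_0_l; lra.
have far := insdel_LCC_hamming_gt (proj1 eps_bd) injC LCC.
have [|M [M_ge M_le]] := @exists_nat_between (4 * INR k / delta).
  apply: Rmult_le_pos; first by have := pos_INR k; lra.
  by apply/Rlt_le/Rinv_0_lt_compat; lra.
have delta_le2 : (0 < delta <= 2)%R by lra.
have [l sep_l] := exists_separating_features k_gt0 delta_le2 M_ge far.
have [d [g [enc [encP dM card_le]]]] := exists_shattered_features sep_l.
exists d, (C \o enc); split; first exact: insdel_LDC_of_features LCC encP.
exact: rate_lower_bound delta_bd k_gt0 M_le dM card_le.
Qed.
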